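(* Let $0<k\le16/(3\sqrt3)$, and let $t_1(k)\le t_2(k)$ be the real zeros of $8t^3-8t+k$ in the interval $(0,1)$ (they coincide, equal to $1/\sqrt3$, when $k=16/(3\sqrt3)$). For $x=e^{i\theta}$ on the unit circle with $\cos\theta\neq 0$ set $$y_{1}(x)=\frac{k+\sqrt{k^2-16\cos^2\theta\,(3-4\cos^2\theta)}}{4\cos\theta},\qquad y_{2}(x)=\frac{k-\sqrt{k^2-16\cos^2\theta\,(3-4\cos^2\theta)}}{4\cos\theta}.$$ Then: if $|\cos\theta|=t_1(k)$ then $|y_2(x)|=1$; and if $|\cos\theta|=t_2(k)$ then $|y_1(x)|=1$ when $0<k\le2\sqrt2$, and $|y_2(x)|=1$ when $2\sqrt2\le k\le16/(3\sqrt3)$.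
   Context: $y_1(x),y_2(x)$ are the two roots in $y$ of $(x+x^{-1})y^2-ky-(x^3+x^{-3})=0$ (which equals $-y^3R_k(x/y,1/(xy))$ for $R_k(x,y)=y^3-y+x^3-x+kxy$). Here $\sqrt{\cdot}$ is the principal square root. For $0<k<16/(3\sqrt3)$ the cubic $8t^3-8t+k$ has exactly two zeros in $(0,1)$, with $t_1(k)<1/\sqrt3<t_2(k)$. *)

From Stdlib Require Import Reals.
From Coquelicot Require Import Coquelicot.
Open Scope R_scope.

(* Principal square root of a complex number z = a + ib:
   sqrt z = sqrt((|z|+a)/2) + i * s * sqrt((|z|-a)/2), with s = +1 if b >= 0,
   s = -1 if b < 0 (branch cut on the negative real axis, Re sqrt z >= 0). *)
Definition csqrt (z : C) : C :=
  let a := fst z in let b := snd z in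
  let m := Cmod z in
  (sqrt ((m + a) / 2),
   (if Rle_dec 0 b then 1 else -1) * sqrt ((m - a) / 2)).

Definition discr (k th : R) : C :=
  RtoC (k ^ 2 - 16 * (cos th) ^ 2 * (3 - 4 * (cos th) ^ 2)).

Definition y1 (k th : R) : C :=
  Cdiv (Cplus (RtoC k) (csqrt (discr k th))) (RtoC (4 * cos th)).
Definition y2 (k th : R) : C :=
  Cdiv (Cminus (RtoC k) (csqrt (discr k th))) (RtoC (4 * cos th)).

(** On the circle, the root equation [k = 8 t (1 - t^2)] for [t = |cos th|] makes the
    discriminant a perfect square, [16 c^2 (1 - 2 c^2)^2] with [c = cos th], so one of
    [k -+ sqrt D] equals [4 |c|] and the corresponding [y] is [+-1]; which one is decided
    by the sign of [1 - 2 c^2].  It remains to place the roots of [8 t^3 - 8 t + k]: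
    any root [t] has a companion root [s] with [s^2 + s t + t^2 = 1], which puts [t1]
    below [1/sqrt 3] and [t2] above it, and [t2] lies above [1/sqrt 2] exactly when
    [k <= 2 sqrt 2]. *)
From Stdlib Require Import Reals Lra Psatz.
From Coquelicot Require Import Coquelicot.
Open Scope R_scope.

Lemma csqrt_RtoC (d : R) : 0 <= d -> csqrt (RtoC d) = RtoC (sqrt d).
Proof.
  intro Hd. unfold csqrt, RtoC; simpl.
  change (Cmod (d, 0)) with (Cmod (RtoC d)); rewrite Cmod_R, Rabs_right by lra.
  destruct (Rle_dec 0 0) as [_ | ]; [| lra].
  replace ((d + d) / 2) with d by field.
  replace ((d - d) / 2) with 0 by field.
  rewrite sqrt_0, Rmult_0_r; reflexivity.
Qed.

Lemma Cmod_real_quotient (a b : R) : b <> 0 -> Cmod (Cdiv (RtoC a) (RtoC b)) = Rabs (a / b).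
Proof. intro Hb. rewrite <- RtoC_div by exact Hb. apply Cmod_R. Qed.

Section OnTheRootCurve.

Variables k c : R.
Hypothesis c_neq0 : c <> 0.
Hypothesis k_on_root : k = 8 * Rabs c * (1 - c ^ 2).

Lemma discr_perfect_square :
  k ^ 2 - 16 * c ^ 2 * (3 - 4 * c ^ 2) = (4 * c * (1 - 2 * c ^ 2)) ^ 2.
Proof.
  rewrite k_on_root.
  replace ((8 * Rabs c * (1 - c ^ 2)) ^ 2) with (64 * Rabs c ^ 2 * (1 - c ^ 2) ^ 2)
    by ring.
  rewrite pow2_abs; ring.
Qed.

Lemma discr_nonneg : 0 <= k ^ 2 - 16 * c ^ 2 * (3 - 4 * c ^ 2).
Proof. rewrite discr_perfect_square; apply pow2_ge_0. Qed.

Lemma sqrt_discr : sqrt (k ^ 2 - 16 * c ^ 2 * (3 - 4 * c ^ 2)) = Rabs (4 * c * (1 - 2 * c ^ 2)).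
Proof. rewrite discr_perfect_square, <- Rsqr_pow2; apply sqrt_Rsqr_abs. Qed.

Lemma abs_4abs_div_4 : Rabs (4 * Rabs c / (4 * c)) = 1.
Proof.
  rewrite Rabs_div by lra.
  rewrite !Rabs_mult, Rabs_Rabsolu, (Rabs_right 4) by lra.
  field; now apply Rabs_no_R0.
Qed.

Lemma minus_branch_unit :
  2 * c ^ 2 <= 1 -> Rabs ((k - sqrt (k ^ 2 - 16 * c ^ 2 * (3 - 4 * c ^ 2))) / (4 * c)) = 1.
Proof.
  intro Hc2. rewrite <- abs_4abs_div_4; do 2 f_equal.
  rewrite sqrt_discr, !Rabs_mult, (Rabs_right 4), (Rabs_right (1 - _)), k_on_root by lra.
  ring.
Qed.

Lemma plus_branch_unit :
  1 <= 2 * c ^ 2 -> Rabs ((k + sqrt (k ^ 2 - 16 * c ^ 2 * (3 - 4 * c ^ 2))) / (4 * c)) = 1.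
Proof.
  intro Hc2. rewrite <- abs_4abs_div_4; do 2 f_equal.
  rewrite sqrt_discr, !Rabs_mult, (Rabs_right 4), (Rabs_left1 (1 - _)), k_on_root by lra.
  ring.
Qed.

End OnTheRootCurve.

Lemma Cmod_y2_on_root (k th : R) :
  cos th <> 0 -> k = 8 * Rabs (cos th) * (1 - cos th ^ 2) ->
  2 * cos th ^ 2 <= 1 -> Cmod (y2 k th) = 1.
Proof.
  intros Hc Hk Hc2. unfold y2, discr.
  rewrite csqrt_RtoC by (apply discr_nonneg; assumption).
  rewrite <- RtoC_minus, Cmod_real_quotient by lra.
  now apply minus_branch_unit.
Qed.

Lemma Cmod_y1_on_root (k th : R) :
  cos th <> 0 -> k = 8 * Rabs (cos th) * (1 - cos th ^ 2) ->
  1 <= 2 * cos th ^ 2 -> Cmod (y1 k th) = 1.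
Proof.
  intros Hc Hk Hc2. unfold y1, discr.
  rewrite csqrt_RtoC by (apply discr_nonneg; assumption).
  rewrite <- RtoC_plus, Cmod_real_quotient by lra.
  now apply plus_branch_unit.
Qed.

(* The companion root [s] solves [s^2 + s t + t^2 = 1]: dividing the cubic by [t - s]. *)
Lemma cubic_companion_root (k t : R) :
  0 < t < 1 -> 8 * t ^ 3 - 8 * t + k = 0 ->
  let s := (sqrt (4 - 3 * t ^ 2) - t) / 2 in
  0 < s < 1 /\ 8 * s ^ 3 - 8 * s + k = 0 /\
  (3 * t ^ 2 < 1 -> t < s) /\ (1 < 3 * t ^ 2 -> s < t).
Proof.
  intros Ht Hroot s.
  assert (Hr2 : sqrt (4 - 3 * t ^ 2) * sqrt (4 - 3 * t ^ 2) = 4 - 3 * t ^ 2)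
    by (apply sqrt_sqrt; nra).
  pose proof (sqrt_pos (4 - 3 * t ^ 2)) as Hr0.
  unfold s; set (r := sqrt (4 - 3 * t ^ 2)) in *.
  split; [split | split; [| split]].
  - assert (t < r) by nra. lra.
  - assert (r < 2 + t) by nra. lra.
  - replace (8 * ((r - t) / 2) ^ 3) with (r * (r * r) - 3 * (r * r) * t + 3 * r * t ^ 2 - t ^ 3)
      by field.
    rewrite Hr2; nra.
  - intro. assert (3 * t < r) by nra. lra.
  - intro. assert (r < 3 * t) by nra. lra.
Qed.

Lemma cubic_at_two_sqrt2_factor (t : R) :
  8 * t ^ 3 - 8 * t + 2 * sqrt 2 = 2 * (2 * t - sqrt 2) * (2 * t ^ 2 + t * sqrt 2 - 1).
Proof.
  pose proof (sqrt_sqrt 2 ltac:(lra)) as H2.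
  replace (2 * (2 * t - sqrt 2) * (2 * t ^ 2 + t * sqrt 2 - 1))
    with (8 * t ^ 3 - 2 * t * (sqrt 2 * sqrt 2) - 4 * t + 2 * sqrt 2) by ring.
  rewrite H2; ring.
Qed.

Lemma two_sqrt2_compare (t : R) :
  0 < t -> 1 <= 3 * t ^ 2 ->
  (8 * t - 8 * t ^ 3 <= 2 * sqrt 2 -> 1 <= 2 * t ^ 2) /\
  (2 * sqrt 2 <= 8 * t - 8 * t ^ 3 -> 2 * t ^ 2 <= 1).
Proof.
  intros Ht Ht2.
  pose proof (sqrt_sqrt 2 ltac:(lra)) as H2.
  pose proof (sqrt_lt_R0 2 ltac:(lra)) as H2pos.
  pose proof (cubic_at_two_sqrt2_factor t) as Hfac.
  assert (Hpos : 0 < 2 * t ^ 2 + t * sqrt 2 - 1).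
  { assert (1 / 9 < (t * sqrt 2) ^ 2) by nra. nra. }
  split; intro Hk.
  - assert (sqrt 2 <= 2 * t) by nra. nra.
  - assert (2 * t <= sqrt 2) by nra. nra.
Qed.

Theorem lemma4 (k t1 t2 : R) :
  0 < k -> k <= 16 / (3 * sqrt 3) ->
  0 < t1 < 1 -> 0 < t2 < 1 -> t1 <= t2 ->
  (forall t, 0 < t < 1 -> (8 * t ^ 3 - 8 * t + k = 0 <-> (t = t1 \/ t = t2))) ->
  forall th : R, cos th <> 0 ->
    (Rabs (cos th) = t1 -> Cmod (y2 k th) = 1) /\
    (Rabs (cos th) = t2 ->
       (k <= 2 * sqrt 2 -> Cmod (y1 k th) = 1) /\
       (2 * sqrt 2 <= k -> Cmod (y2 k th) = 1)).
Proof.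
  intros _ _ Ht1 Ht2 Ht12 Hroots th Hc.
  assert (R1 : 8 * t1 ^ 3 - 8 * t1 + k = 0) by (apply Hroots; auto).
  assert (R2 : 8 * t2 ^ 3 - 8 * t2 + k = 0) by (apply Hroots; auto).
  assert (Hsq : forall t, Rabs (cos th) = t -> cos th ^ 2 = t ^ 2)
    by (intros t <-; rewrite pow2_abs; reflexivity).
  assert (L1 : 3 * t1 ^ 2 <= 1).
  { apply Rnot_lt_le; intro Hgt.
    destruct (cubic_companion_root k t1 Ht1 R1) as (Hs & Hs_root & _ & Hbelow).
    destruct (proj1 (Hroots _ Hs) Hs_root); specialize (Hbelow Hgt); lra. }
  assert (L2 : 1 <= 3 * t2 ^ 2).
  { apply Rnot_lt_le; intro Hlt.
    destruct (cubic_companion_root k t2 Ht2 R2) as (Hs & Hs_root & Habove & _).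
    destruct (proj1 (Hroots _ Hs) Hs_root); specialize (Habove Hlt); lra. }
  split; intro E; pose proof (Hsq _ E) as Q;
    assert (Hk : k = 8 * Rabs (cos th) * (1 - cos th ^ 2)) by (rewrite E, Q; lra).
  - apply Cmod_y2_on_root; auto; rewrite Q; lra.
  - destruct (two_sqrt2_compare t2 ltac:(lra) L2) as [Hle Hge].
    split; intro K.
    + apply Cmod_y1_on_root; auto; rewrite Q; apply Hle; lra.
    + apply Cmod_y2_on_root; auto; rewrite Q; apply Hge; lra.
Qed.
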